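(* Let $F=(F_0,F_1,F_2)$ be a gapset filtration of genus $g\ge2$ and depth at most $3$ (padded with empty sets). Let $\alpha_1,\alpha_2$ be the maps on gapset filtrations $E=(E_0,E_1,E_2)$ of depth at most $3$ and multiplicity $k$ given by $\alpha_1(E)=(E_0\sqcup\{k\},E_1,E_2)$ and $\alpha_2(E)=(E_0\sqcup\{k\},E_1\sqcup\{k\},E_2)$. Then \begin{itemize} \item $F=\alpha_1(E)$ for some gapset filtration $E$ of depth at most $3$ if and only if $\max F_0>\max F_1$; \item $F=\alpha_2(E)$ for some gapset filtration $E$ of depth at most $3$ if and only if $\max F_0=\max F_1>\max F_2$. \end{itemize}
   Context: A gapset is a finite set $G \subset \mathbb{N}_+$ such that for all $z \in G$, whenever $z=x+y$ with $x,y\in\mathbb{N}_+$, we have $x\in G$ or $y\in G$. Its multiplicity is the least $m\ge1$ with $m\notin G$, its genus is $|G|$, and its depth is $\lceil c/m\rceil$ where $c=\max G+1$ ($c=0$ if $G=\emptyset$). For $m\ge1$, an $m$-filtration is a sequence $(F_0,\dots,F_t)$ with $F_0=[1,m-1]\supseteq F_1\supseteq\dots\supseteq F_t$; it is a gapset filtration if $\bigcup_i(im+F_i)$ is a gapset, and its multiplicity, genus (equal to $\sum_i|F_i|$) and depth are those of that gapset. Convention: $\max\emptyset=0$. *)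

From HB Require Import structures.
From mathcomp Require Import all_boot all_order.
From mathcomp Require Import finmap.
Set Implicit Arguments. Unset Strict Implicit. Unset Printing Implicit Defensive.
Local Open Scope fset_scope.

Definition is_gapset (G : {fset nat}) : Prop :=
  (0 \notin G) /\
  forall z x y : nat, z \in G -> z = (x + y)%N -> 0 < x -> 0 < y ->
    (x \in G) \/ (y \in G).

(* Convention: max ∅ = 0. *)
Definition fmax (A : {fset nat}) : nat := \max_(x <- A) x.

Lemma multiplicity_ex (G : {fset nat}) : exists n, (0 < n) && (n \notin G).
Proof.
exists (fmax G).+1; apply/andP; split => //.
apply/negP => h.
have := @leq_bigmax_seq nat (G : seq nat) xpredT (fun x => x) _ h isT.
by rewrite /fmax ltnn.
Qed.

Definition multiplicity (G : {fset nat}) : nat := ex_minn (multiplicity_ex G).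

Definition genus (G : {fset nat}) : nat := #|` G |.

Definition fint (a b : nat) : {fset nat} := [fset x | x in iota a (b.+1 - a)%N].

(* A filtration of depth at most 3, padded with empty sets: (F_0, F_1, F_2). *)
Definition filt3 := ({fset nat} * {fset nat} * {fset nat})%type.
Definition F0 (F : filt3) := F.1.1.
Definition F1 (F : filt3) := F.1.2.
Definition F2 (F : filt3) := F.2.

Definition is_m_filtration3 (m : nat) (F : filt3) : Prop :=
  0 < m /\ F0 F = fint 1 (m - 1)%N /\ F1 F `<=` F0 F /\ F2 F `<=` F1 F.

Definition gapset_of (m : nat) (F : filt3) : {fset nat} :=
  F0 F `|` [fset (m + x)%N | x in F1 F] `|` [fset (2 * m + x)%N | x in F2 F].

Definition is_gapset_filtration3 (m : nat) (F : filt3) : Prop :=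
  is_m_filtration3 m F /\ is_gapset (gapset_of m F).

Definition filt_multiplicity (m : nat) (F : filt3) := multiplicity (gapset_of m F).
Definition filt_genus (m : nat) (F : filt3) := genus (gapset_of m F).
Definition depth (G : {fset nat}) : nat :=
  let c := if G == fset0 then 0 else (fmax G).+1 in
  let m := multiplicity G in ((c + m.-1) %/ m)%N.
Definition filt_depth (m : nat) (F : filt3) := depth (gapset_of m F).

Definition alpha1 (k : nat) (E : filt3) : filt3 :=
  (F0 E `|` [fset k], F1 E, F2 E).
Definition alpha2 (k : nat) (E : filt3) : filt3 :=
  (F0 E `|` [fset k], F1 E `|` [fset k], F2 E).

From mathcomp Require Import all_boot all_order.
From mathcomp Require Import finmap.
From mathcomp Require Import zify.

(* Removing m-1 from F_0 and from F_1 (alpha_inv) is the only candidate preimage of a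
   filtration F of multiplicity m >= 2 under alpha1 or alpha2. Since max F_0 = m-1, the
   conditions on the maxima say exactly that m-1 is missing from F_2 and missing from,
   resp. present in, F_1. The one non-formal point is that the preimage is again a gapset:
   a splitting z = x + y with x, y >= m-1 of an element of its top layer lifts to the
   splitting z+2 = (x+1) + (y+1) of an element of the gapset of F. *)

Set Implicit Arguments. Unset Strict Implicit. Unset Printing Implicit Defensive.
Local Open Scope fset_scope.

Lemma in_fint a b x : (x \in fint a b) = (a <= x <= b).
Proof. by rewrite /fint inE /= mem_iota; apply/idP/idP; lia. Qed.

Lemma fint1S n : fint 1 n `|` [fset n.+1] = fint 1 n.+1.
Proof. by apply/fsetP => x; rewrite in_fsetU in_fset1 !in_fint; apply/idP/idP; lia. Qed.

Lemma fmax_le (A : {fset nat}) n : {in A, forall x, x <= n} -> fmax A <= n.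
Proof. by move=> le_n; apply/bigmax_leqP_seq => x xA _; apply: le_n. Qed.

Lemma le_fmax (A : {fset nat}) x : x \in A -> x <= fmax A.
Proof. by move=> xA; apply: (leq_bigmax_seq (F := id) x xA). Qed.

Lemma fmax_lt_notin (A : {fset nat}) x : fmax A < x -> x \notin A.
Proof. by apply: contraTN => /le_fmax; rewrite -leqNgt. Qed.

Lemma fmax_subset (A B : {fset nat}) : A `<=` B -> fmax A <= fmax B.
Proof. by move=> /fsubsetP sAB; apply: fmax_le => x /sAB /le_fmax. Qed.

Lemma fmaxU (A B : {fset nat}) : fmax (A `|` B) = maxn (fmax A) (fmax B).
Proof.
apply/eqP; rewrite eqn_leq geq_max !fmax_subset ?fsubsetUl ?fsubsetUr //= andbT.
by apply: fmax_le => x; rewrite in_fsetU => /orP[] /le_fmax; lia.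
Qed.

Lemma fmax1 a : fmax [fset a] = a.
Proof. by rewrite /fmax big_seq_fset1. Qed.

Lemma fmax_fint1 n : fmax (fint 1 n) = n.
Proof.
apply/eqP; rewrite eqn_leq fmax_le => [/=|x]; last by rewrite in_fint => /andP[].
by case: n => // n; rewrite le_fmax // in_fint leqnn.
Qed.

Lemma fmax_mem (A : {fset nat}) : 0 < fmax A -> fmax A \in A.
Proof.
suff max_mem (s : seq nat) : 0 < \max_(x <- s) x -> \max_(x <- s) x \in s by apply: max_mem.
elim: s => [|a s IH]; rewrite ?big_nil // big_cons inE.
set M := \big[maxn/0]_(x <- s) x in IH *.
by case: (leqP a M) => [_ /IH -> | _ _]; rewrite ?orbT ?eqxx.
Qed.

Lemma mem_shift_fset k (A : {fset nat}) x :
  (x \in [fset (k + a)%N | a in A]) = (k <= x) && (x - k \in A).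
Proof.
apply/imfsetP/andP => [[a aA ->] | [le_kx xkA]]; first by rewrite leq_addr addKn.
by exists (x - k); rewrite ?subnKC.
Qed.

Section MFiltration.

Variables (m : nat) (F : filt3).
Hypothesis mF : is_m_filtration3 m F.

Lemma m_filtration3_F1_bound b : b \in F1 F -> 0 < b < m.
Proof. by case: mF => m0 [-> [/fsubsetP sF10 _]] /sF10; rewrite in_fint; lia. Qed.

Lemma m_filtration3_F2_bound c : c \in F2 F -> 0 < c < m.
Proof. by case: mF => _ [_ [_ /fsubsetP sF21]] /sF21 /m_filtration3_F1_bound. Qed.

Lemma fmax_m_filtration3 : fmax (F0 F) = m.-1 /\ fmax (F2 F) <= fmax (F1 F) <= m.-1.
Proof.
case: mF => _ [F0E [sF10 sF21]].
have fmaxF0 : fmax (F0 F) = m.-1 by rewrite F0E fmax_fint1 subn1.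
by split=> //; rewrite -fmaxF0 !fmax_subset.
Qed.

Lemma in_gapset_of x : (x \in gapset_of m F) =
  [|| 0 < x < m, (m < x < 2 * m) && (x - m \in F1 F)
    | (2 * m < x < 3 * m) && (x - 2 * m \in F2 F)].
Proof.
case: (mF) => m0 [F0E _].
rewrite /gapset_of !in_fsetU !mem_shift_fset F0E in_fint.
apply/idP/or3P => [/orP[/orP[x_lt | /andP[x_ge F1x]] | /andP[x_ge F2x]] | ].
- by constructor 1; lia.
- by constructor 2; rewrite F1x andbT; move/m_filtration3_F1_bound: F1x; lia.
- by constructor 3; rewrite F2x andbT; move/m_filtration3_F2_bound: F2x; lia.
case=> [x_lt | /andP[x_lt ->] | /andP[x_lt ->]]; rewrite ?andbT.
- by apply/orP; left; apply/orP; left; lia.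
- by apply/orP; left; apply/orP; right; lia.
- by apply/orP; right; lia.
Qed.

Lemma multiplicity_gapset_of : multiplicity (gapset_of m F) = m.
Proof.
have m0 := mF.1; rewrite /multiplicity; case: ex_minnP => k /andP[k0 kG] min_k.
apply/eqP; rewrite eqn_leq; apply/andP; split.
- apply: min_k; rewrite m0 in_gapset_of ltnn /= !andbF /=.
  by apply/negP => /andP[/andP[lt_2mm _] _]; lia.
- by rewrite leqNgt; apply/negP => lt_km; move: kG; rewrite in_gapset_of k0 lt_km.
Qed.

Lemma filt_depth_le3 : filt_depth m F <= 3.
Proof.
have m0 := mF.1; rewrite /filt_depth /depth multiplicity_gapset_of.
have : fmax (gapset_of m F) <= (3 * m).-1.
  by apply: fmax_le => x; rewrite in_gapset_of => /or3P[| /andP[+ _] | /andP[+ _]]; lia.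
move=> le_max; rewrite -ltnS ltn_divLR //; case: ifP => _; lia.
Qed.

End MFiltration.

Definition alpha_inv (n : nat) (F : filt3) : filt3 := (fint 1 n, F1 F `\ n.+1, F2 F).

Lemma m_filtration3_alpha_inv n F :
  is_m_filtration3 n.+2 F -> n.+1 \notin F2 F -> is_m_filtration3 n.+1 (alpha_inv n F).
Proof.
move=> mF F2n; have [_ [_ [_ /fsubsetP sF21]]] := mF.
split=> //; split; first by rewrite /= subn1.
split; apply/fsubsetP => b; rewrite /= in_fsetD1.
- by case/andP=> b_neq /(m_filtration3_F1_bound mF); rewrite in_fint; lia.
- by move=> F2b; rewrite sF21 // andbT; apply: contraNneq F2n => <-.
Qed.

Lemma gapset_filtration3_alpha_inv n F :
  is_gapset_filtration3 n.+2 F -> n.+1 \notin F2 F ->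
  is_gapset_filtration3 n.+1 (alpha_inv n F).
Proof.
move=> [mF [_ gapF]] F2n; have mE := m_filtration3_alpha_inv mF F2n.
split=> //; split; first by rewrite in_gapset_of.
have lift u : n.+1 <= u < 2 * n.+1 -> u.+1 \in gapset_of n.+2 F ->
    u \in gapset_of n.+1 (alpha_inv n F).
  rewrite !in_gapset_of // => u_bd /or3P[| /andP[u_lt F1u] | /andP[u_lt _]]; try lia.
  apply/or3P; constructor 2; rewrite /= in_fsetD1 -subSS F1u andbT; lia.
move=> z x y Gz z_eq x0 y0.
case: (ltnP x n.+1) => [x_lt | x_ge]; first by left; rewrite in_gapset_of // x0 x_lt.
case: (ltnP y n.+1) => [y_lt | y_ge]; first by right; rewrite in_gapset_of // y0 y_lt.
move: Gz; rewrite in_gapset_of // => /or3P[| /andP[z_lt _] | /andP[z_bd F2c]]; try lia.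
have c_bd := m_filtration3_F2_bound mE F2c.
have c_neq : z - 2 * n.+1 != n.+1 by apply: contraNneq F2n => <-.
have [Gx | Gy] : x.+1 \in gapset_of n.+2 F \/ y.+1 \in gapset_of n.+2 F.
  apply: (gapF z.+2) => //; last lia.
  rewrite in_gapset_of // (_ : z.+2 - 2 * n.+2 = z - 2 * n.+1) ?F2c ?andbT; lia.
- by left; apply: lift Gx; lia.
- by right; apply: lift Gy; lia.
Qed.

Lemma alpha1_alpha_inv n F :
  is_m_filtration3 n.+2 F -> n.+1 \notin F1 F -> alpha1 n.+1 (alpha_inv n F) = F.
Proof.
case: F => [[A B] C] [_ [A_eq _]]; rewrite /alpha1 /alpha_inv /F0 /F1 /F2 /= in A_eq * => Bn.
by rewrite fint1S A_eq mem_fsetD1.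
Qed.

Lemma alpha2_alpha_inv n F :
  is_m_filtration3 n.+2 F -> n.+1 \in F1 F -> alpha2 n.+1 (alpha_inv n F) = F.
Proof.
case: F => [[A B] C] [_ [A_eq _]]; rewrite /alpha2 /alpha_inv /F0 /F1 /F2 /= in A_eq * => Bn.
by rewrite fint1S A_eq fsetUC fsetD1K.
Qed.

Definition alpha_image (alpha : nat -> filt3 -> filt3) (F : filt3) : Prop :=
  exists k E, is_gapset_filtration3 k E /\ filt_depth k E <= 3 /\
    F = alpha (filt_multiplicity k E) E.

Lemma alpha_image_alpha_inv alpha n F :
  is_gapset_filtration3 n.+2 F -> n.+1 \notin F2 F ->
  alpha n.+1 (alpha_inv n F) = F -> alpha_image alpha F.
Proof.
move=> gF F2n alphaE; have gE := gapset_filtration3_alpha_inv gF F2n.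
exists n.+1, (alpha_inv n F); split=> //; split; first exact: filt_depth_le3 gE.1.
by rewrite /filt_multiplicity (multiplicity_gapset_of gE.1).
Qed.

Lemma fmax_alpha1 k E : is_m_filtration3 k E ->
  fmax (F1 (alpha1 k E)) < fmax (F0 (alpha1 k E)).
Proof.
move=> mE; have [fmax0 /andP[_ fmax1_le]] := fmax_m_filtration3 mE.
rewrite /alpha1 /F0 /F1 /F2 /= in fmax0 fmax1_le *.
rewrite fmaxU fmax0 fmax1; have := mE.1; lia.
Qed.

Lemma fmax_alpha2 k E : is_m_filtration3 k E ->
  fmax (F0 (alpha2 k E)) = fmax (F1 (alpha2 k E)) /\
  fmax (F2 (alpha2 k E)) < fmax (F1 (alpha2 k E)).
Proof.
move=> mE; have [fmax0 /andP[fmax21 fmax1_le]] := fmax_m_filtration3 mE.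
rewrite /alpha2 /F0 /F1 /F2 /= in fmax0 fmax21 fmax1_le *.
rewrite !fmaxU fmax0 fmax1; have := mE.1; lia.
Qed.

Lemma alpha1_imageP m F : is_gapset_filtration3 m F ->
  alpha_image alpha1 F <-> fmax (F1 F) < fmax (F0 F).
Proof.
move=> gF; split=> [[k [E [[mE _] [_ ->]]]] |].
  by rewrite /filt_multiplicity multiplicity_gapset_of //; apply: fmax_alpha1.
have [-> /andP[fmax21 _]] := fmax_m_filtration3 gF.1.
case: m gF => [|[|n]] gF; rewrite ?ltn0 // => fmax1_lt.
apply: (alpha_image_alpha_inv gF); first exact: fmax_lt_notin (leq_ltn_trans fmax21 fmax1_lt).
exact: alpha1_alpha_inv gF.1 (fmax_lt_notin fmax1_lt).
Qed.

Lemma alpha2_imageP m F : is_gapset_filtration3 m F ->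
  alpha_image alpha2 F <-> fmax (F0 F) = fmax (F1 F) /\ fmax (F2 F) < fmax (F1 F).
Proof.
move=> gF; split=> [[k [E [[mE _] [_ ->]]]] |].
  by rewrite /filt_multiplicity multiplicity_gapset_of //; apply: fmax_alpha2.
have [-> _] := fmax_m_filtration3 gF.1.
case: m gF => [|[|n]] gF /= [fmax1 fmax2_lt]; rewrite -fmax1 ?ltn0 // in fmax2_lt.
apply: (alpha_image_alpha_inv gF); first exact: fmax_lt_notin fmax2_lt.
by apply: alpha2_alpha_inv gF.1 _; rewrite fmax1 fmax_mem // -fmax1.
Qed.

Theorem mainTheorem13 (m : nat) (F : filt3) :
  is_gapset_filtration3 m F ->
  filt_depth m F <= 3 ->
  2 <= filt_genus m F ->
  ((exists (k : nat) (E : filt3),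
      is_gapset_filtration3 k E /\ filt_depth k E <= 3 /\
      F = alpha1 (filt_multiplicity k E) E)
   <-> fmax (F1 F) < fmax (F0 F))
  /\
  ((exists (k : nat) (E : filt3),
      is_gapset_filtration3 k E /\ filt_depth k E <= 3 /\
      F = alpha2 (filt_multiplicity k E) E)
   <-> fmax (F0 F) = fmax (F1 F) /\ fmax (F2 F) < fmax (F1 F)).
Proof.
move=> gF _ _.
by split; [apply: alpha1_imageP gF | apply: alpha2_imageP gF].
Qed.
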